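(* Let $z=(z^1,\dots,z^n)$ be coordinates on an open set $Z\subset\mathbb{R}^n$, with $x^a=z^a$ ($a=1,\dots,n-1$) and $u=z^n$, and let $w=w(z)$ be a scalar unknown. The second-order equation $\tilde E(z;w_i;w_{ij})=0$ together with the condition $w=0$ is a covariant form of some second-order partial differential equation $E(x,u;u_a;u_{ab})=0$ if and only if it is invariant under the infinite-dimensional group of point transformations $(z,w)\mapsto(z,s(z)w)$, where $s$ ranges over smooth nowhere-vanishing functions of $z$.
   Context: Here $w_i=\partial w/\partial z^i$, $w_{ij}=\partial^2w/\partial z^i\partial z^j$, $u_a=\partial u/\partial x^a$, $u_{ab}=\partial^2 u/\partial x^a\partial x^b$, and one works on the region $w_n\ne0$. Invariance means invariance of the system $\{\tilde E=0,\ w=0\}$ in the second-order jet space under the second prolongation of the transformations; at points with $w=0$ the prolonged transformation acts by $w_i\mapsto s w_i$, $w_{ij}\mapsto s w_{ij}+s_i w_j+s_j w_i$ (with $s_i=\partial s/\partial z^i$). If $u=u(x)$ is defined implicitly by $w(x,u)=0$, then $u_a[w]=-w_a/w_n$ and $u_{ab}[w]=-\frac{w_{ab}}{w_n}+\frac{w_{na}w_b}{w_n^2}+\frac{w_{nb}w_a}{w_n^2}-\frac{w_aw_bw_{nn}}{w_n^3}$. The equation $\tilde E(z;w_i;w_{ij})=0$ together with $w=0$ is called a covariant form of $E(x,u;u_a;u_{ab})=0$ if, for all $z$ and all values of $(w_i,w_{ij})$ with $w_n\neq0$, $\tilde E(z;w_i;w_{ij})=0$ holds if and only if $E(z;u_a[w];u_{ab}[w])=0$.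 *)

From HB Require Import structures.
From mathcomp Require Import all_boot all_order all_algebra.
From mathcomp Require Import all_classical all_reals all_analysis.
Set Implicit Arguments. Unset Strict Implicit. Unset Printing Implicit Defensive.
Import Order.TTheory GRing.Theory Num.Theory.
Import numFieldNormedType.Exports.
Local Open Scope ring_scope.
Local Open Scope classical_set_scope.

Section Defs.
Variable R : realType.

Fixpoint iderive (V : normedModType R) (f : V -> R) (ds : seq V) : V -> R :=
  match ds with
  | [::] => f
  | v :: ds' => fun z => derive (iderive f ds') z v
  end.

Definition smooth_on (V : normedModType R) (Z : set V) (f : V -> R) : Prop :=
  forall (ds : seq V) (v : V) (z : V), Z z -> derivable (iderive f ds) z v.

Variable m : nat.
(* n = m.+1 ; indices 'I_m.+1 ; z^n is the index ord_max ;
   x^a (a : 'I_m) is z^(widen a). *)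
Definition xidx (a : 'I_m) : 'I_m.+1 := widen_ord (leqnSn m) a.
Definition nidx : 'I_m.+1 := ord_max.

Definition u1 (p : 'rV[R]_m.+1) : 'rV[R]_m :=
  \row_(a < m) (- p 0 (xidx a) / p 0 nidx).

Definition u2 (p : 'rV[R]_m.+1) (W : 'M[R]_m.+1) : 'M[R]_m :=
  \matrix_(a < m, b < m)
    (- W (xidx a) (xidx b) / p 0 nidx
     + W nidx (xidx a) * p 0 (xidx b) / (p 0 nidx ^+ 2)
     + W nidx (xidx b) * p 0 (xidx a) / (p 0 nidx ^+ 2)
     - p 0 (xidx a) * p 0 (xidx b) * W nidx nidx / (p 0 nidx ^+ 3)).

(* Et : (z; w_i; w_ij) -> R, E : ((x,u); u_a; u_ab) -> R, with (x,u) = z. *)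
Definition covariant_form (Z : set 'rV[R]_m.+1)
  (Et : 'rV[R]_m.+1 -> 'rV[R]_m.+1 -> 'M[R]_m.+1 -> R)
  (E : 'rV[R]_m.+1 -> 'rV[R]_m -> 'M[R]_m -> R) : Prop :=
  forall (z p : 'rV[R]_m.+1) (W : 'M[R]_m.+1), Z z -> W^T = W -> p 0 nidx != 0 ->
    (Et z p W = 0 <-> E z (u1 p) (u2 p W) = 0).

Definition grad (s : 'rV[R]_m.+1 -> R) (z : 'rV[R]_m.+1) : 'rV[R]_m.+1 :=
  \row_(i < m.+1) derive s z (delta_mx 0 i).

(* Invariance of {Et = 0, w = 0} (on the region w_n <> 0) under the second
   prolongation of (z,w) |-> (z, s(z) w), s smooth and nowhere vanishing. *)
Definition invariant_under_rescaling (Z : set 'rV[R]_m.+1)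
  (Et : 'rV[R]_m.+1 -> 'rV[R]_m.+1 -> 'M[R]_m.+1 -> R) : Prop :=
  forall s : 'rV[R]_m.+1 -> R,
    smooth_on Z s -> (forall z, Z z -> s z != 0) ->
    forall (z p : 'rV[R]_m.+1) (W : 'M[R]_m.+1), Z z -> W^T = W -> p 0 nidx != 0 ->
      Et z p W = 0 ->
      Et z (s z *: p)
           (s z *: W + (grad s z)^T *m p + p^T *m grad s z) = 0.

End Defs.

From HB Require Import structures.
From mathcomp Require Import all_boot all_order all_algebra.
From mathcomp Require Import all_classical all_reals all_analysis.
From mathcomp Require Import ring lra.
Import Order.TTheory GRing.Theory Num.Theory.
Import numFieldNormedType.Exports.
Local Open Scope ring_scope.
Local Open Scope classical_set_scope.
Set Implicit Arguments. Unset Strict Implicit.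

(** The prolonged rescaling by [s] maps the jet [(p, W)] of [w] at [z] to
   [(s z *: p, s z *: W + (grad s z)^T *m p + p^T *m grad s z)], and [u1], [u2] are
   unchanged by it; hence a covariant form is invariant. Conversely, only the value
   and gradient of [s] at [z] enter, and these can be prescribed freely by
   [s = Q \o l] with [l] linear and [Q] a quadratic without real roots. Every jet
   with [p 0 n != 0] is thereby carried to its normal form: [p = (-u_a, 1)], and
   [W] with entries [-u_ab] and vanishing [n]-th row and column. An invariant [Et]
   is determined by its values on normal jets, so [Et] at the normal jet built from
   [(u_a, u_ab)] is a covariant form. *)

Section smooth_rescalings.
Variables (R : realType) (n : nat).
Local Notation V := 'rV[R]_n.

Lemma is_derive_coord (i : 'I_n) (y v : V) :
  is_derive y v (fun x : V => x 0 i) (v 0 i).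
Proof.
have dv : derivable (@id V) y v by [].
apply: DeriveDef; first exact: (derivable_mxP _ _ _).1 dv 0 i.
by rewrite -[in RHS](derive_id y v) derive_mx // mxE.
Qed.

Definition dotv (l x : V) : R := \sum_(i < n) x 0 i * l 0 i.

Lemma dotv_delta (l : V) (i : 'I_n) : dotv l (delta_mx 0 i) = l 0 i.
Proof.
rewrite /dotv (bigD1 i) //= big1 => [|j ji]; first by rewrite mxE !eqxx mul1r addr0.
by rewrite mxE (negbTE ji) andbF mul0r.
Qed.

Lemma is_derive_dotv (l y v : V) : is_derive y v (dotv l) (dotv l v).
Proof.
have -> : dotv l = \sum_(i < n) ((fun x : V => x 0 i) * cst (l 0 i)).
  by apply: funext => x; rewrite /dotv fct_sumE.
apply: is_derive_eq.
  by apply: is_derive_sum => i; apply: is_deriveM; exact: is_derive_coord.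
by rewrite fct_sumE; apply: eq_bigr => i _; rewrite /= scaler0 add0r mulrC.
Qed.

Lemma is_derive_horner_dotv (Q : {poly R}) (l y v : V) :
  is_derive y v (fun x => Q.[dotv l x]) (dotv l v * Q^`().[dotv l y]).
Proof.
elim/poly_ind: Q => [|Q c IH].
  under eq_fun do rewrite horner0.
  by apply: is_derive_eq; rewrite deriv0 horner0 mulr0.
have -> : (fun x => (Q * 'X + c%:P).[dotv l x])
          = (fun x => Q.[dotv l x]) * dotv l + cst c.
  by apply: funext => x; rewrite /= hornerMXaddC.
apply: is_derive_eq.
  by apply: is_deriveD; exact: is_deriveM IH (is_derive_dotv l y v).
rewrite derivMXaddC /= !hornerE /GRing.scale /=; ring.
Qed.

Lemma iderive_horner_dotv (Q : {poly R}) (l : V) (ds : seq V) :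
  exists Q' : {poly R}, iderive (fun x => Q.[dotv l x]) ds = fun x => Q'.[dotv l x].
Proof.
elim: ds => [|v ds [Q' IH]]; first by exists Q.
exists (dotv l v *: Q'^`()); rewrite /= IH; apply: funext => y.
by rewrite (@derive_val _ _ _ _ _ _ _ (is_derive_horner_dotv Q' l y v)) hornerZ.
Qed.

Lemma smooth_on_horner_dotv (Z : set V) (Q : {poly R}) (l : V) :
  smooth_on Z (fun x => Q.[dotv l x]).
Proof.
move=> ds v y _; have [Q' ->] := iderive_horner_dotv Q l ds.
exact: (@ex_derive _ _ _ _ _ _ _ (is_derive_horner_dotv Q' l y v)).
Qed.

End smooth_rescalings.

Lemma exists_smooth_unit_jet (R : realType) (m : nat) (Z : set 'rV[R]_m.+1)
    (c : R) (g z0 : 'rV[R]_m.+1) : c != 0 ->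
  exists s, [/\ smooth_on Z s, forall z, s z != 0, s z0 = c & grad s z0 = g].
Proof.
move=> c0; pose l := c^-1 *: g; pose t := 'X - (dotv l z0)%:P.
pose Q : {poly R} := c *: (t * t + t + 1).
have QE x : Q.[x] = c * ((x - dotv l z0) ^+ 2 + (x - dotv l z0) + 1).
  by rewrite /Q /t !hornerE expr2.
exists (fun x => Q.[dotv l x]); split.
- exact: smooth_on_horner_dotv.
- move=> z; rewrite QE mulf_neq0 // lt0r_neq0 //.
  set u := _ - _; nra.
- by rewrite QE subrr expr0n /= !add0r mulr1.
- apply/rowP => i; rewrite mxE
    (@derive_val _ _ _ _ _ _ _ (is_derive_horner_dotv Q l z0 _)) dotv_delta.
  rewrite /Q /t !poly.derivE !hornerE subrr /l mxE.
  by rewrite /= add0r subrr add0r mulr1 mulrAC mulVf // mul1r.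
Qed.

Lemma sym_mxE (T : Type) (k : nat) (W : 'M[T]_k) (i j : 'I_k) :
  W^T = W -> W j i = W i j.
Proof. by move=> sW; rewrite -[in LHS]sW mxE. Qed.

Section prolongation.
Variables (R : realType) (m : nat).
Local Notation V := 'rV[R]_m.+1.
Local Notation n := (nidx m).

Definition prolong_hess (c : R) (g p : V) (W : 'M[R]_m.+1) : 'M[R]_m.+1 :=
  c *: W + g^T *m p + p^T *m g.

Lemma prolong_hessE (c : R) (g p : V) (W : 'M[R]_m.+1) (i j : 'I_m.+1) :
  prolong_hess c g p W i j = c * W i j + g 0 i * p 0 j + p 0 i * g 0 j.
Proof. by rewrite !mxE !big_ord1 !mxE. Qed.

Lemma prolong_hess_sym (c : R) (g p : V) (W : 'M[R]_m.+1) :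
  W^T = W -> (prolong_hess c g p W)^T = prolong_hess c g p W.
Proof.
move=> sW; apply/matrixP => i j.
by rewrite mxE !prolong_hessE (sym_mxE i j sW); ring.
Qed.

Lemma prolong_hessK (c : R) (g p : V) (W : 'M[R]_m.+1) : c != 0 ->
  prolong_hess c^-1 (- (c ^+ 2)^-1 *: g) (c *: p) (prolong_hess c g p W) = W.
Proof. by move=> c0; apply/matrixP => i j; rewrite !prolong_hessE !mxE; field. Qed.

Lemma u1Z (c : R) (p : V) : c != 0 -> p 0 n != 0 -> u1 (c *: p) = u1 p.
Proof. by move=> c0 pn0; apply/rowP => a; rewrite !mxE; field; rewrite c0 pn0. Qed.

Lemma u2_prolong_hess (c : R) (g p : V) (W : 'M[R]_m.+1) : c != 0 -> p 0 n != 0 ->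
  u2 (c *: p) (prolong_hess c g p W) = u2 p W.
Proof.
move=> c0 pn0; apply/matrixP => a b.
by rewrite [LHS]mxE [RHS]mxE !prolong_hessE !mxE; field; rewrite c0 pn0.
Qed.

Definition normal_grad (q : 'rV[R]_m) : V :=
  \row_i (if unlift n i is Some a then - q 0 a else 1).

Definition normal_hess (U : 'M[R]_m) : 'M[R]_m.+1 :=
  \matrix_(i, j) (if (unlift n i, unlift n j) is (Some a, Some b) then - U a b else 0).

(* The gradient for which [prolong_hess (p 0 n)^-1 _ p W] has vanishing [n]-th
   row and column. *)
Definition normalizing_grad (p : V) (W : 'M[R]_m.+1) : V :=
  let gn := - W n n / (2 * p 0 n ^+ 2) in
  \row_i (if unlift n i is Some a
          then - (W n (xidx a) / p 0 n + gn * p 0 (xidx a)) / p 0 n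
          else gn).

Lemma lift_nidx (a : 'I_m) : lift n a = xidx a.
Proof. by apply: val_inj; rewrite /= /bump leqNgt ltn_ord. Qed.

Lemma normal_gradE (p : V) : p 0 n != 0 -> (p 0 n)^-1 *: p = normal_grad (u1 p).
Proof.
move=> pn0; apply/rowP => i; rewrite !mxE.
by case: unliftP => [a ->|->]; rewrite ?lift_nidx ?mxE; field.
Qed.

Lemma normal_hessE (p : V) (W : 'M[R]_m.+1) : p 0 n != 0 -> W^T = W ->
  prolong_hess (p 0 n)^-1 (normalizing_grad p W) p W = normal_hess (u2 p W).
Proof.
move=> pn0 sW; apply/matrixP => i j; rewrite prolong_hessE !mxE.
case: unliftP => [a ->|->]; case: unliftP => [b ->|->]; rewrite ?lift_nidx ?mxE.
- by field.
- by rewrite (sym_mxE n (xidx a) sW); field.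
- by field.
- by field.
Qed.

End prolongation.

Section invariance.
Variables (R : realType) (m : nat) (Z : set 'rV[R]_m.+1).
Variable Et : 'rV[R]_m.+1 -> 'rV[R]_m.+1 -> 'M[R]_m.+1 -> R.
Local Notation n := (nidx m).

Lemma invariant_prolong_hess : invariant_under_rescaling Z Et ->
  forall (c : R) (g z p : 'rV[R]_m.+1) (W : 'M[R]_m.+1),
  c != 0 -> Z z -> W^T = W -> p 0 n != 0 ->
  Et z p W = 0 -> Et z (c *: p) (prolong_hess c g p W) = 0.
Proof.
move=> inv c g z p W c0 Zz sW pn0.
have [s [ss s0 <- <-]] := exists_smooth_unit_jet Z g z c0.
exact: inv ss (fun y _ => s0 y) z p W Zz sW pn0.
Qed.

Lemma invariant_prolong_hessE : invariant_under_rescaling Z Et ->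
  forall (c : R) (g z p : 'rV[R]_m.+1) (W : 'M[R]_m.+1),
  c != 0 -> Z z -> W^T = W -> p 0 n != 0 ->
  Et z (c *: p) (prolong_hess c g p W) = 0 <-> Et z p W = 0.
Proof.
move=> inv c g z p W c0 Zz sW pn0; split; last exact: invariant_prolong_hess.
have cinv0 : c^-1 != 0 by rewrite invr_eq0.
have cpn0 : (c *: p) 0 n != 0 by rewrite mxE mulf_neq0.
move/(invariant_prolong_hess inv (- (c ^+ 2)^-1 *: g) cinv0 Zz
        (prolong_hess_sym c g p sW) cpn0).
by rewrite prolong_hessK // scalerA mulVf // scale1r.
Qed.

Lemma covariant_form_invariant (E : 'rV[R]_m.+1 -> 'rV[R]_m -> 'M[R]_m -> R) :
  covariant_form Z Et E -> invariant_under_rescaling Z Et.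
Proof.
move=> cov s _ s0 z p W Zz sW pn0.
have sz0 := s0 z Zz; have spn0 : (s z *: p) 0 n != 0 by rewrite mxE mulf_neq0.
rewrite -/(prolong_hess (s z) (grad s z) p W).
rewrite (cov z p W Zz sW pn0) (cov _ _ _ Zz (prolong_hess_sym _ _ p sW) spn0).
by rewrite u1Z // u2_prolong_hess.
Qed.

Lemma invariant_covariant_form : invariant_under_rescaling Z Et ->
  covariant_form Z Et (fun z q U => Et z (normal_grad q) (normal_hess U)).
Proof.
move=> inv z p W Zz sW pn0 /=.
rewrite -normal_gradE // -normal_hessE //.
by rewrite (invariant_prolong_hessE inv) // invr_eq0.
Qed.

End invariance.

Theorem theorem3 (R : realType) (m : nat) (Z : set 'rV[R]_m.+1) (hZ : open Z)
  (Et : 'rV[R]_m.+1 -> 'rV[R]_m.+1 -> 'M[R]_m.+1 -> R) :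
  (exists E : 'rV[R]_m.+1 -> 'rV[R]_m -> 'M[R]_m -> R, covariant_form Z Et E)
  <-> invariant_under_rescaling Z Et.
Proof.
split=> [[E]|inv]; first exact: covariant_form_invariant.
by eexists; exact: invariant_covariant_form.
Qed.
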